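(* Let $k>0$ and $j\ge 0$ be integers and let $p\in\mathbb{C}[z,z^{-1},u]$. Let $\min_u$ denote the minimal degree in $u$ of a monomial occurring in $p$ (with $\min_u:=0$ if $p=0$). Let $E$ be the rank-$2$ holomorphic vector bundle on $Z_k$ with transition matrix $T=\begin{pmatrix} z^j & p(z,u)\\ 0 & z^{-j}\end{pmatrix}$ from $U$ to $V$. Let $(a,b)$ be a section of $E$ over $U$, with $a=\sum_{r,s\ge0}a_{rs}z^su^r$ and $b=\sum_{r,s\ge0}b_{rs}z^su^r$ holomorphic on $U$, such that both $z^ja+pb$ and $z^{-j}b$ are holomorphic functions of $(z^{-1},z^ku)$. Then for every $r<\min_u$ we have $a_{rs}=0$ for all $s>kr-j$; that is, the terms of $a$ of degree $r$ in $u$, if any, are among $a_{r0}u^r+\dots+a_{r,kr-j}u^rz^{kr-j}$.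
   Context: $Z_k$ denotes the total space of the line bundle $\mathcal{O}_{\mathbb{P}^1}(-k)$, covered by two charts $U\cong\mathbb{C}^2$ with coordinates $(z,u)$ and $V\cong\mathbb{C}^2$ with coordinates $(w,v)$, glued on $U\cap V=\{z\neq0\}$ by $w=z^{-1}$, $v=z^ku$. A holomorphic function on $U\cap V$ with Laurent expansion $\sum c_{rs}z^su^r$ is holomorphic in $(z^{-1},z^ku)$, i.e. extends holomorphically to $V$, exactly when $c_{rs}=0$ whenever $s>kr$. Sections over $U$ of the bundle with transition matrix $T$ are pairs $(a,b)$ of holomorphic functions on $U$; such a section extends over $V$ iff $\binom{z^ja+pb}{z^{-j}b}$ extends holomorphically to $V$. *)

From HB Require Import structures.
From mathcomp Require Import all_boot all_order all_algebra.
From mathcomp Require Import reals Rstruct complex.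
Set Implicit Arguments. Unset Strict Implicit. Unset Printing Implicit Defensive.
Import Order.TTheory GRing.Theory Num.Theory.
Local Open Scope ring_scope.
Local Open Scope complex_scope.

Definition C : numClosedFieldType := complex Rdefinitions.R.

(* A power series sum_{r,s>=0} a r s * z^s * u^r on U = C^2, given by its
   coefficient family (a r s = coefficient of z^s u^r). It is holomorphic
   on all of C^2 iff for every radius rad > 0 the terms |a_rs| rad^(r+s)
   are bounded (Cauchy estimates). *)
Definition entire2 (a : nat -> nat -> C) : Prop :=
  forall rad : Rdefinitions.R, 0 < rad ->
    exists M : Rdefinitions.R, forall r s : nat,
      `|a r s| * (rad%:C) ^+ (r + s) <= M%:C.

(* A Laurent series sum_{r>=0, s in Z} c r s z^s u^r on U ∩ V extends
   holomorphically to V (is holomorphic in (z^-1, z^k u)) exactly when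
   c r s = 0 whenever s > k r  (characterization from the context). *)
Definition extendsV (k : nat) (c : nat -> int -> C) : Prop :=
  forall (r : nat) (s : int), (k * r)%:Z < s -> c r s = 0.

Definition coefU (a : nat -> nat -> C) (r : nat) (s : int) : C :=
  match s with Posz n => a r n | Negz _ => 0 end.

(* The Laurent polynomial p in C[z,z^-1,u] is written p = z^-N q(z,u) with
   N : nat and q in C[z][u] : {poly {poly C}} (outer variable u), so the
   coefficient of z^s u^r in p is (q`_r)`_(s+N). *)

Definition coef_zj_mul (j : nat) (a : nat -> nat -> C) (r : nat) (s : int) : C :=
  coefU a r (s - j%:Z).

Definition coef_zmj_mul (j : nat) (b : nat -> nat -> C) (r : nat) (s : int) : C :=
  coefU b r (s + j%:Z).

Definition coef_p_mul (N : nat) (q : {poly {poly C}}) (b : nat -> nat -> C)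
    (r : nat) (s : int) : C :=
  \sum_(r1 < r.+1) \sum_(t < size (q`_r1))
     (q`_r1)`_t * coefU b (r - r1)%N (s + N%:Z - t%:Z).

(* min_u of p = z^-N q: the least u-degree of a monomial of p, i.e. the index
   of the first nonzero coefficient of q as a polynomial in u;
   equals size q = 0 when p = 0. *)
Definition minu (q : {poly {poly C}}) : nat := find (fun c => c != 0) q.

(* Below min_u the polynomial p has no monomials, so the coefficient of z^s u^r
   in z^j a + p b is just a_{r,s-j}; extension to V forces it to vanish for
   s > kr, i.e. a_{rs} = 0 for s > kr - j. *)
From HB Require Import structures.
From mathcomp Require Import all_boot all_order all_algebra.
From mathcomp Require Import reals Rstruct complex.
Import Order.TTheory GRing.Theory Num.Theory.
Local Open Scope ring_scope.

Lemma coef_lt_minu (q : {poly {poly C}}) (i : nat) :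
  (i < minu q)%N -> q`_i = 0.
Proof. by move=> /(before_find 0) /negbFE /eqP. Qed.

Lemma coef_p_mul_lt_minu (N : nat) (q : {poly {poly C}})
    (b : nat -> nat -> C) (r : nat) (s : int) :
  (r < minu q)%N -> coef_p_mul N q b r s = 0.
Proof.
move=> r_lt; rewrite /coef_p_mul big1 // => r1 _.
have r1_lt : (r1 < minu q)%N by apply: leq_ltn_trans r_lt; rewrite -ltnS.
by rewrite coef_lt_minu // size_poly0 big_ord0.
Qed.

Lemma coef_zj_mulD (j : nat) (a : nat -> nat -> C) (r s : nat) :
  coef_zj_mul j a r (s%:Z + j%:Z) = a r s.
Proof. by rewrite /coef_zj_mul addrK. Qed.

Theorem mainTheorem3 (k j N : nat) (q : {poly {poly C}})
    (a b : nat -> nat -> C) :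
  (0 < k)%N ->
  entire2 a -> entire2 b ->
  extendsV k (fun r s => coef_zj_mul j a r s + coef_p_mul N q b r s) ->
  extendsV k (coef_zmj_mul j b) ->
  forall r : nat, (r < minu q)%N ->
  forall s : nat, (k * r)%:Z - j%:Z < s%:Z -> a r s = 0.
Proof.
move=> _ _ _ extV_top _ r r_lt s s_gt.
have := extV_top r (s%:Z + j%:Z).
rewrite coef_p_mul_lt_minu // addr0 coef_zj_mulD; apply.
by rewrite -ltrBlDr.
Qed.
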